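(* Let $\ell:\mathbb R\times\{-1,+1\}\to\mathbb R$ be convex and twice differentiable in its first argument. Suppose $0\le\alpha<1$, $\max\{e_{+1},e_{-1}\}<0.5$, $\ell''(t,y)=\ell''(t,-y)$ for all $t\in\mathbb R$ and $y\in\{-1,+1\}$, and $\alpha(1-2p)(1-e_{+1}-e_{-1})=(1-\alpha)(e_{+1}-e_{-1})$. Then the map $f\mapsto R_{\ell_{\alpha\text{-peer}},\tilde{\mathcal D}}(f)$ is convex, i.e. for all measurable $f,g:\mathcal X\to\mathbb R$ (with finite risks) and $\lambda\in[0,1]$, $R_{\ell_{\alpha\text{-peer}},\tilde{\mathcal D}}(\lambda f+(1-\lambda)g)\le\lambda R_{\ell_{\alpha\text{-peer}},\tilde{\mathcal D}}(f)+(1-\lambda)R_{\ell_{\alpha\text{-peer}},\tilde{\mathcal D}}(g)$.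
   Context: Let $\mathcal X\subseteq\mathbb R^d$ and let $(X,Y)$ be a random pair with distribution $\mathcal D$ on $\mathcal X\times\{-1,+1\}$, with $p:=\mathbb P(Y=+1)\in(0,1)$. A noisy label $\tilde Y\in\{-1,+1\}$ is generated with noise rates $e_{+1}:=\mathbb P(\tilde Y=-1\mid Y=+1)$, $e_{-1}:=\mathbb P(\tilde Y=+1\mid Y=-1)$, $e_{-1}+e_{+1}<1$, and $\tilde Y$ is conditionally independent of $X$ given $Y$; $\tilde{\mathcal D}$ is the distribution of $(X,\tilde Y)$. For a weight $\alpha$, $$R_{\ell_{\alpha\text{-peer}},\tilde{\mathcal D}}(f):=\mathbb E[\ell(f(X),\tilde Y)]-\alpha\,\mathbb E[\ell(f(X_1),\tilde Y_2)],$$ with $(X,\tilde Y),(X_1,\tilde Y_1),(X_2,\tilde Y_2)$ i.i.d. from $\tilde{\mathcal D}$. *)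

From HB Require Import structures.
From mathcomp Require Import all_boot all_order all_algebra.
From mathcomp Require Import all_classical all_reals all_analysis.
Set Implicit Arguments. Unset Strict Implicit. Unset Printing Implicit Defensive.
Import Order.TTheory GRing.Theory Num.Theory.
Local Open Scope classical_set_scope.
Local Open Scope ring_scope.

(* Labels {-1,+1} are encoded as bool: true = +1, false = -1; the label -y
   is ~~ y. *)

Section defs.
Context (R : realType) (dO : measure_display) (Omega : measurableType dO)
  (P : probability Omega R).

Definition prob_pos (Y : Omega -> bool) : R := fine (P [set w | Y w]).

Definition noise_pos (Y Yt : Omega -> bool) : R :=
  fine (P [set w | Y w /\ ~~ Yt w]) / prob_pos Y.

Definition noise_neg (Y Yt : Omega -> bool) : R :=
  fine (P [set w | ~~ Y w /\ Yt w]) / (1 - prob_pos Y).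

Definition cond_indep_given {dX} {TX : measurableType dX}
    (X : Omega -> TX) (Y Yt : Omega -> bool) : Prop :=
  forall (A : set TX) (b c : bool), measurable A ->
    (P [set w | X w \in A /\ Yt w = b /\ Y w = c] * P [set w | Y w = c] =
     P [set w | X w \in A /\ Y w = c] * P [set w | Yt w = b /\ Y w = c])%E.

(* alpha-peer risk under the noisy distribution:
   E[l(f(X), Yt)] - alpha * E[l(f(X_1), Yt_2)],
   where (X_1,Yt_1), (X_2,Yt_2) are independent copies, realised on the
   product space (Omega * Omega, P \x P). *)
Definition peer_risk {dX} {TX : measurableType dX}
    (X : Omega -> TX) (Yt : Omega -> bool) (l : R -> bool -> R) (alpha : R)
    (f : TX -> R) : R :=
  Rintegral P setT (fun w => l (f (X w)) (Yt w))
  - alpha * Rintegral (P \x P)%E setT (fun w => l (f (X w.1)) (Yt w.2)).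

Definition finite_peer_risk {dX} {TX : measurableType dX}
    (X : Omega -> TX) (Yt : Omega -> bool) (l : R -> bool -> R)
    (f : TX -> R) : Prop :=
  P.-integrable setT (fun w => (l (f (X w)) (Yt w))%:E) /\
  (P \x P)%E.-integrable setT (fun w => (l (f (X w.1)) (Yt w.2))%:E).

End defs.

From HB Require Import structures.
From mathcomp Require Import all_boot all_order all_algebra.
From mathcomp Require Import all_classical all_reals all_analysis.
From mathcomp Require Import lra ring.
Set Implicit Arguments. Unset Strict Implicit. Unset Printing Implicit Defensive.
Import Order.TTheory GRing.Theory Num.Theory.
Local Open Scope classical_set_scope.
Local Open Scope ring_scope.

(** Since ℓ'' does not depend on the label, ℓ(·,+1) - ℓ(·,-1) is affine, so the
    Jensen gap λ ℓ(u,y) + (1-λ) ℓ(v,y) - ℓ(λu + (1-λ)v, y) is the same for both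
    labels.  The Jensen gap of the peer risk is then the expected gap of the clean
    term minus α times that of the peer term; in the peer term the independent
    label drops out by Fubini, leaving (1-α) times a nonnegative integral. *)

Section affine_derivative.
Variable R : realType.

Lemma is_derive_cst_affine (h : R -> R) (a : R) :
  (forall t, is_derive t (1 : R) h a) -> forall t, h t = a * t + h 0.
Proof.
move=> dh t.
have dG s : is_derive s (1 : R) (h - a \*: id) 0.
  have := is_deriveZ a (is_derive_id s (1 : R)); rewrite scaler1 => da.
  by rewrite -(subrr a); apply: is_deriveB.
have : h t - a * t = h 0 - a * 0 := is_derive_0_is_cst t 0 dG.
lra.
Qed.

Lemma eq_derive2_sub_affine (f g : R -> R) :
  (forall t, derivable f t 1) -> (forall t, derivable g t 1) ->
  (forall t, derivable (derive1 f) t 1) -> (forall t, derivable (derive1 g) t 1) ->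
  (forall t, derive1 (derive1 f) t = derive1 (derive1 g) t) ->
  exists a b, forall t, f t - g t = a * t + b.
Proof.
move=> df dg df' dg' d2fg.
have d1 t : is_derive t (1 : R) (derive1 f - derive1 g) 0.
  by rewrite -(subrr (derive1 (derive1 f) t)) {2}d2fg !derive1E; apply: is_deriveB.
have d0 t : is_derive t (1 : R) (f - g) (derive1 f 0 - derive1 g 0).
  have <- : derive1 f t - derive1 g t = derive1 f 0 - derive1 g 0.
    exact: is_derive_0_is_cst d1.
  by rewrite !derive1E; apply: is_deriveB.
by exists (derive1 f 0 - derive1 g 0), (f 0 - g 0); exact: is_derive_cst_affine d0.
Qed.
End affine_derivative.

Section jensen_gap.
Variable R : realType.

Definition jensen_gap (h : R -> R) (lam u v : R) : R :=
  lam * h u + (1 - lam) * h v - h (lam * u + (1 - lam) * v).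

Lemma jensen_gap_ge0 (h : R -> R) (lam u v : R) :
  (forall a b t, 0 <= t <= 1 -> h (t * a + (1 - t) * b) <= t * h a + (1 - t) * h b) ->
  0 <= lam <= 1 -> 0 <= jensen_gap h lam u v.
Proof. by move=> hconv lam01; rewrite subr_ge0; exact: hconv. Qed.

Lemma eq_jensen_gap_affine_sub (h1 h2 : R -> R) (a b : R) :
  (forall t, h1 t - h2 t = a * t + b) ->
  forall lam u v, jensen_gap h1 lam u v = jensen_gap h2 lam u v.
Proof.
move=> h12 lam u v; have e t : h1 t = h2 t + (a * t + b) by rewrite -h12 subrKC.
by rewrite /jensen_gap !e; ring.
Qed.

End jensen_gap.

Section integral_lincomb.
Context d (T : measurableType d) (R : realType) (mu : {measure set T -> \bar R}).
Variables (F G H : T -> R) (s t : R).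
Hypotheses (iF : mu.-integrable setT (EFin \o F))
  (iG : mu.-integrable setT (EFin \o G)) (iH : mu.-integrable setT (EFin \o H)).

Let integrable_scale r {K : T -> R} : mu.-integrable setT (EFin \o K) ->
  mu.-integrable setT (EFin \o (fun w => r * K w)).
Proof. by move=> iK; apply: eq_integrable (integrableZl measurableT r iK). Qed.

Lemma integrable_lincomb :
  mu.-integrable setT (EFin \o (fun w => s * F w + t * G w - H w)).
Proof.
have iFG := integrableD measurableT (integrable_scale s iF) (integrable_scale t iG).
by apply: eq_integrable (integrableB measurableT iFG iH).
Qed.

Lemma Rintegral_lincomb :
  Rintegral mu setT (fun w => s * F w + t * G w - H w) =
  s * Rintegral mu setT F + t * Rintegral mu setT G - Rintegral mu setT H.
Proof.
rewrite RintegralB //; last exact: integrableD (integrable_scale s iF) (integrable_scale t iG).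
by rewrite RintegralD // ?RintegralZl //; exact: integrable_scale.
Qed.

End integral_lincomb.

Lemma Rintegral_prod_fst d1 d2 (T1 : measurableType d1) (T2 : measurableType d2)
  (R : realType) (mu : {sigma_finite_measure set T1 -> \bar R})
  (P : probability T2 R) (D : T1 -> R) :
  (mu \x P)%E.-integrable setT (EFin \o (fun w => D w.1)) ->
  Rintegral (mu \x P)%E setT (fun w => D w.1) = Rintegral mu setT D.
Proof.
move=> iD; rewrite /Rintegral -(integral12_prod_meas1 iD); congr fine.
apply: eq_integral => x _; rewrite /fubini_F /= integral_cst //.
by rewrite [X in (_ * X)%E]probability_setT mule1.
Qed.

Section peer_risk_convexity.
Context (R : realType) (dO : measure_display) (Omega : measurableType dO)
  (P : probability Omega R) {dX} {TX : measurableType dX}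
  (X : Omega -> TX) (Yt : Omega -> bool) (l : R -> bool -> R) (alpha lam : R)
  (f g : TX -> R).
Let c x := lam * f x + (1 - lam) * g x.
Let gap x := jensen_gap (l^~ false) lam (f x) (g x).
Hypothesis gap_label_free :
  forall y u v, jensen_gap (l^~ y) lam u v = jensen_gap (l^~ false) lam u v.
Hypotheses (rf : finite_peer_risk P X Yt l f) (rg : finite_peer_risk P X Yt l g)
  (rc : finite_peer_risk P X Yt l c).

Lemma peer_risk_jensen_gap :
  lam * peer_risk P X Yt l alpha f + (1 - lam) * peer_risk P X Yt l alpha g
    - peer_risk P X Yt l alpha c
  = (1 - alpha) * Rintegral P setT (gap \o X).
Proof.
case: rf rg rc => [i1f i2f] [i1g i2g] [i1c i2c].
have clean_gap : Rintegral P setT (fun w =>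
    lam * l (f (X w)) (Yt w) + (1 - lam) * l (g (X w)) (Yt w) - l (c (X w)) (Yt w))
  = Rintegral P setT (gap \o X).
  by apply: eq_Rintegral => w _; exact: gap_label_free.
have peer_gap : Rintegral (P \x P)%E setT (fun w =>
    lam * l (f (X w.1)) (Yt w.2) + (1 - lam) * l (g (X w.1)) (Yt w.2)
    - l (c (X w.1)) (Yt w.2))
  = Rintegral P setT (gap \o X).
  have i2 := integrable_lincomb lam (1 - lam) i2f i2g i2c.
  transitivity (Rintegral (P \x P)%E setT (fun w => gap (X w.1))).
    by apply: eq_Rintegral => w _; exact: gap_label_free.
  apply: Rintegral_prod_fst; apply: eq_integrable i2 => // w _.
  by congr EFin; exact: (gap_label_free (Yt w.2) (f (X w.1)) (g (X w.1))).
move: clean_gap peer_gap.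
rewrite (Rintegral_lincomb _ _ i1f i1g i1c) (Rintegral_lincomb _ _ i2f i2g i2c).
by move=> e1 e2; rewrite /peer_risk [RHS]mulrBl mul1r -{1}e1 -e2; ring.
Qed.

End peer_risk_convexity.

Theorem lemma4 (R : realType) (dO : measure_display) (Omega : measurableType dO)
  (P : probability Omega R) (d : nat) (calX : set (d.-tuple R))
  (X : Omega -> d.-tuple R) (Y Yt : Omega -> bool)
  (l : R -> bool -> R) (alpha : R) :
  (* the random pair and the noisy label *)
  measurable calX -> measurable_fun setT X ->
  (forall w, calX (X w)) ->
  measurable [set w | Y w] -> measurable [set w | Yt w] ->
  0 < prob_pos P Y < 1 ->
  cond_indep_given P X Y Yt ->
  noise_neg P Y Yt + noise_pos P Y Yt < 1 ->
  (* the loss: convex and twice differentiable in its first argument *)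
  (forall y (a b t : R), 0 <= t <= 1 ->
     l (t * a + (1 - t) * b) y <= t * l a y + (1 - t) * l b y) ->
  (forall y (t : R), derivable (l^~ y) t 1 /\ derivable (derive1 (l^~ y)) t 1) ->
  (* hypotheses of the lemma *)
  0 <= alpha < 1 ->
  Num.max (noise_pos P Y Yt) (noise_neg P Y Yt) < 2^-1 ->
  (forall y (t : R), derive1 (derive1 (l^~ y)) t = derive1 (derive1 (l^~ (~~ y))) t) ->
  alpha * (1 - 2 * prob_pos P Y) * (1 - noise_pos P Y Yt - noise_neg P Y Yt)
    = (1 - alpha) * (noise_pos P Y Yt - noise_neg P Y Yt) ->
  (* conclusion: convexity of f |-> peer risk *)
  forall (f g : d.-tuple R -> R) (lam : R),
    measurable_fun calX f -> measurable_fun calX g ->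
    0 <= lam <= 1 ->
    finite_peer_risk P X Yt l f -> finite_peer_risk P X Yt l g ->
    finite_peer_risk P X Yt l (fun x => lam * f x + (1 - lam) * g x) ->
    peer_risk P X Yt l alpha (fun x => lam * f x + (1 - lam) * g x)
      <= lam * peer_risk P X Yt l alpha f + (1 - lam) * peer_risk P X Yt l alpha g.
Proof.
move=> _ _ _ _ _ _ _ _ l_convex l_derivable alpha01 _ l''_sym _ f g lam _ _ lam01 rf rg rc.
have [a [b l_diff_affine]] : exists a b, forall t, l t true - l t false = a * t + b.
  apply: eq_derive2_sub_affine => t.
  - exact: (l_derivable true t).1.
  - exact: (l_derivable false t).1.
  - exact: (l_derivable true t).2.
  - exact: (l_derivable false t).2.
  - exact: l''_sym.
have gap_label_free y u v :
    jensen_gap (l^~ y) lam u v = jensen_gap (l^~ false) lam u v.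
  by case: y => //; exact: eq_jensen_gap_affine_sub l_diff_affine lam u v.
have gap_ge0 : 0 <= Rintegral P setT (fun w =>
    jensen_gap (l^~ false) lam (f (X w)) (g (X w))).
  by apply: Rintegral_ge0 => w _; exact: jensen_gap_ge0 (l_convex false) lam01.
have := peer_risk_jensen_gap alpha gap_label_free rf rg rc.
have alpha_le1 : 0 <= 1 - alpha by case/andP: alpha01 => _ /ltW; rewrite subr_ge0.
have := mulr_ge0 alpha_le1 gap_ge0; lra.
Qed.
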